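(* If $n$ is a non-negative integer, then $$\sum_{k = 1}^n \sum_{j = 0}^{k - 1} (-1)^{k-j+1} F_{n-j} = F_{2(\lfloor (n-1)/2 \rfloor + 1)}$$ and $$\sum_{k = 1}^n \sum_{j = 0}^{k - 1} (-1)^{k-j+1} L_{n-j} = L_{2(\lfloor (n-1)/2 \rfloor + 1)} - 2.$$
   Context: $F_n$ are the Fibonacci numbers ($F_0=0$, $F_1=1$, $F_{n}=F_{n-1}+F_{n-2}$) and $L_n$ the Lucas numbers ($L_0=2$, $L_1=1$, $L_{n}=L_{n-1}+L_{n-2}$). Empty sums are zero. *)

From mathcomp Require Import all_boot all_order all_algebra.
Set Implicit Arguments. Unset Strict Implicit. Unset Printing Implicit Defensive.

Fixpoint fib (n : nat) : nat :=
  match n with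
  | 0 => 0
  | 1 => 1
  | (m.+1 as p).+1 => fib p + fib m
  end.

Fixpoint lucas (n : nat) : nat :=
  match n with
  | 0 => 2
  | 1 => 1
  | (m.+1 as p).+1 => lucas p + lucas m
  end.

From mathcomp Require Import all_boot all_order all_algebra.
Import GRing.Theory Num.Theory.
Local Open Scope ring_scope.

(* Exchanging the two sums, the coefficient of [a (n - j)] is an alternating
   sum of [n - j] signs starting with [+1], i.e. [odd (n - j)]: the double sum
   is the sum of the odd-indexed terms [a 1 + a 3 + ...] up to [n].  For any
   sequence with [u (i + 2) = u (i + 1) + u i] these telescope,
   [u 1 + u 3 + ... + u (2m - 1) = u (2m) - u 0], and [2m] is the largest even
   number [<= n + 1], which is [2 (floor ((n - 1) / 2) + 1)]. *)

Lemma exchange_big_nat_triangle (V : nmodType) n (F : nat -> nat -> V) :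
  \sum_(1 <= k < n.+1) \sum_(0 <= j < k) F k j
    = \sum_(0 <= j < n) \sum_(j.+1 <= k < n.+1) F k j.
Proof.
transitivity (\sum_(1 <= k < n.+1) \sum_(0 <= j < n | (j < k)%N) F k j).
  by apply: eq_big_nat => k /andP[_ le_kn]; rewrite (big_nat_widen 0 k n).
rewrite (exchange_big_dep_nat xpredT) //=.
by apply: eq_big_nat => j _; rewrite (big_nat_widenl j.+1 1).
Qed.

Lemma sum_signr (R : pzRingType) n : \sum_(0 <= i < n) (-1) ^+ i = (odd n)%:R :> R.
Proof.
elim: n => [|n IHn]; first by rewrite big_geq.
by rewrite big_nat_recr //= IHn -signr_odd; case: (odd n); rewrite ?subrr ?add0r.
Qed.

Lemma alternating_double_sum (R : pzRingType) n (a : nat -> R) :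
  \sum_(1 <= k < n.+1) \sum_(0 <= j < k) (-1) ^+ (k - j + 1) * a (n - j)%N
    = \sum_(0 <= i < n.+1) a i *+ odd i.
Proof.
rewrite exchange_big_nat_triangle.
have sign_sum j : (j < n)%N ->
    \sum_(j.+1 <= k < n.+1) (-1) ^+ (k - j + 1) = (odd (n - j))%:R :> R.
  move=> lt_jn; rewrite -{1}(add0n j.+1) big_addn -sum_signr.
  apply: eq_big_nat => i _; rewrite -signr_odd -[in RHS]signr_odd.
  by rewrite -(addSnnS i) addnK addn1 /= negbK.
under eq_big_nat => j /andP[_ lt_jn] do
  rewrite -big_distrl /= sign_sum // mulr_natl.
rewrite big_nat_rev big_nat_recl //= mulr0n add0r.
by apply: eq_big_nat => i /andP[_ lt_in]; rewrite add0n subKn.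
Qed.

Section OddIndexedSums.

Variables (V : zmodType) (u : nat -> V).
Hypothesis u_rec : forall i, u i.+2 = u i.+1 + u i.

Lemma sum_odd_indexed_double m :
  \sum_(0 <= i < m.*2) u i *+ odd i = u m.*2 - u 0.
Proof.
elim: m => [|m IHm]; first by rewrite big_geq // subrr.
rewrite doubleS !big_nat_recr //= IHm odd_double /= mulr0n addr0 mulr1n.
by rewrite u_rec addrAC [u m.*2.+1 + _]addrC.
Qed.

Lemma sum_odd_indexed n : \sum_(0 <= i < n) u i *+ odd i = u (n./2).*2 - u 0.
Proof.
rewrite -{1}(odd_double_half n); case: (odd n); last exact: sum_odd_indexed_double.
by rewrite add1n big_nat_recr //= odd_double mulr0n addr0 sum_odd_indexed_double.
Qed.

End OddIndexedSums.

Lemma floor_half_pred_succ n : ((n%:Z - 1) %/ 2)%Z + 1 = ((n.+1)./2)%:Z.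
Proof.
rewrite addrC -(divzMDl 1 (n%:Z - 1)) // mul1r addrCA [2 - 1]/(1 : int).
by rewrite -PoszD divz_nat divn2 addn1.
Qed.

Theorem proposition4 (n : nat) :
  (\sum_(1 <= k < n.+1) \sum_(0 <= j < k)
      (-1) ^+ (k - j + 1)%N * ((fib (n - j)%N)%:Z) : int)
    = (fib (absz (2 * (((n%:Z - 1) %/ 2)%Z + 1))))%:Z
  /\
  (\sum_(1 <= k < n.+1) \sum_(0 <= j < k)
      (-1) ^+ (k - j + 1)%N * ((lucas (n - j)%N)%:Z) : int)
    = (lucas (absz (2 * (((n%:Z - 1) %/ 2)%Z + 1))))%:Z - 2.
Proof.
have -> : absz (2 * (((n%:Z - 1) %/ 2)%Z + 1)) = ((n.+1)./2).*2.
  by rewrite floor_half_pred_succ -PoszM mul2n.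
rewrite (alternating_double_sum _ n (fun i => (fib i)%:Z)).
rewrite (alternating_double_sum _ n (fun i => (lucas i)%:Z)).
by split; rewrite sum_odd_indexed ?subr0 // => i; rewrite -PoszD.
Qed.
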